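(* Let $(\boldsymbol x^H,\eta^H,\boldsymbol y^H,u^H)$ be the solution returned by Algorithm 1 (described in the context) and $(\boldsymbol x^*,\eta^*,\boldsymbol y^*,u^* )$ an optimal solution of the multistage model. Let $h_{\max}=\max_{i\in[M]}h_{1i}$, $f_{t,\max}=\max_{i}f_{ti}$, $f_{t,\min}=\min_if_{ti}$, $c_{t,\min}=\min_{i\in[M],j\in[N]}c_{tij}$, and $M_{\min}=\lceil\sum_{j=1}^Nd_{1j}/h_{\max}\rceil$, where $\boldsymbol d_1=(d_{11},\ldots,d_{1N})$ is the demand at the root node. Assume the denominator below is positive. Then $$\frac{z^{MS}_{T,R}(\boldsymbol x^H,\eta^H,\boldsymbol y^H,u^H)}{z^{MS}_{T,R}(\boldsymbol x^*,\eta^*,\boldsymbol y^*,u^* )}\le1+\frac{M\sum_{t=1}^Tf_{t,\max}}{M_{\min}\sum_{t=1}^Tf_{t,\min}+\sum_{t=1}^Tc_{t,\min}\min_{n\in\mathcal T_t}\{\sum_{j=1}^Nd_{n,j}\}}.$$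
   Context: Setting. Integers $T\ge2$, $M,N\ge1$; costs $f_{ti}\ge0$ (vector $\boldsymbol f_t$), $c_{tij}\ge0$ (vector $\boldsymbol c_t\in\mathbb R^{MN}$), capacities $h_{ti}>0$; $(\boldsymbol A_t\boldsymbol y)_j=\sum_iy_{ij}$, $(\boldsymbol B_t\boldsymbol y)_i=\frac1{h_{ti}}\sum_jy_{ij}$. Ceilings and maxima of vectors are componentwise. Scenario tree: finite rooted tree, node set $\mathcal T$, root $1$, all root-to-leaf paths of $T$ nodes; $\mathcal T_t$ nodes at depth $t$, $t_n$ period of $n$, $\mathcal L=\mathcal T_T$, $a(n)$ parent, $\mathcal C(n)$ children, $\mathcal P(n)$ nodes on the root-to-$n$ path (inclusive); probabilities $p_n>0$, $\sum_{n\in\mathcal T_t}p_n=1$, $\sum_{m\in\mathcal C(n)}p_m=p_n$; demands $\boldsymbol d_n=(d_{n,1},\ldots,d_{n,N})\in\mathbb R^N_{\ge0}$. Risk parameters $\lambda_t\in[0,1]$, $\alpha_t\in(0,1)$ ($t\ge2$); $\tilde{\boldsymbol f}_n=\boldsymbol f_{t_n}$ if $n=1$ else $(1-\lambda_{t_n})\boldsymbol f_{t_n}$; $\tilde{\boldsymbol c}_n=\boldsymbol c_{t_n}$ if $n=1$ else $(1-\lambda_{t_n})\boldsymbol c_{t_n}$; $\tilde\lambda_n=0$ if $n\in\mathcal L$ else $\lambda_{t_n+1}$; $\tilde\alpha_n=0$ if $n=1$ else $\lambda_{t_n}/(1-\alpha_{t_n})$. Multistage model: minimize $z^{MS}_{T,R}(\boldsymbol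 x,\eta,\boldsymbol y,u):=\sum_{n\in\mathcal T}p_n\big(\tilde{\boldsymbol f}_n^{\mathsf T}\sum_{m\in\mathcal P(n)}\boldsymbol x_m+\tilde{\boldsymbol c}_n^{\mathsf T}\boldsymbol y_n+\tilde\lambda_n\eta_n+\tilde\alpha_nu_n\big)$ over $\boldsymbol x_n\in\mathbb Z^M_+$, $\boldsymbol y_n\in\mathbb R^{MN}_+$ ($n\in\mathcal T$), $\eta_n\in\mathbb R$ ($n\notin\mathcal L$), $u_n\ge0$ ($n\ne1$), subject to $\boldsymbol A_{t_n}\boldsymbol y_n=\boldsymbol d_n$, $\boldsymbol B_{t_n}\boldsymbol y_n\le\sum_{m\in\mathcal P(n)}\boldsymbol x_m$ ($n\in\mathcal T$), $u_n+\eta_{a(n)}\ge\boldsymbol f_{t_n}^{\mathsf T}\sum_{m\in\mathcal P(n)}\boldsymbol x_m+\boldsymbol c_{t_n}^{\mathsf T}\boldsymbol y_n$ ($n\ne1$). Algorithm 1. Step 1: solve the LP relaxation (drop integrality of $\boldsymbol x$) of the multistage model, obtaining an optimal $(\boldsymbol x^{MSLP},\eta^{MSLP},\boldsymbol y^{MSLP},u^{MSLP})$; if all $\boldsymbol x^{MSLP}_n$ are integral, stop and return it. Step 2: set $k=0$ and $(\boldsymbol x^0,\eta^0,\boldsymbol y^0,u^0)=(\boldsymbol x^{MSLP},\eta^{MSLP},\boldsymbol y^{MSLP},u^{MSLP})$. Repeat until successive iterates differ by less than a tolerance $\epsilon$: (a) set $\boldsymbol x^{k+1}_1=\lceil\boldsymbol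 B_{t_1}\boldsymbol y^k_1\rceil$, $\boldsymbol x^{k+1}_n=\max_{m\in\mathcal P(n)}\lceil\boldsymbol B_{t_m}\boldsymbol y^k_m\rceil-\max_{m\in\mathcal P(a(n))}\lceil\boldsymbol B_{t_m}\boldsymbol y^k_m\rceil$ ($n\ne1$), $\eta^{k+1}_n=\max_{m\in\mathcal C(n)}\{\boldsymbol f_{t_m}^{\mathsf T}\sum_{l\in\mathcal P(m)}\boldsymbol x^{k+1}_l+\boldsymbol c_{t_m}^{\mathsf T}\boldsymbol y^k_m-u^k_m\}$ ($n\notin\mathcal L$); (b) for each $n\ne1$ independently, let $(\boldsymbol y^{k+1}_n,u^{k+1}_n)$ be an optimal solution of $\min\tilde{\boldsymbol c}_n^{\mathsf T}\boldsymbol y_n+\tilde\alpha_nu_n$ s.t. $\boldsymbol B_{t_n}\boldsymbol y_n\le\sum_{m\in\mathcal P(n)}\boldsymbol x^{k+1}_m$, $\boldsymbol A_{t_n}\boldsymbol y_n=\boldsymbol d_n$, $u_n-\boldsymbol c_{t_n}^{\mathsf T}\boldsymbol y_n\ge\boldsymbol f_{t_n}^{\mathsf T}\sum_{m\in\mathcal P(n)}\boldsymbol x^{k+1}_m-\eta^{k+1}_{a(n)}$, $\boldsymbol y_n\ge0$, $u_n\ge0$; for $n=1$ solve the same problem without $u_1$ and the last constraint; (c) $k\leftarrow k+1$. Return the final iterate, denoted $(\boldsymbol x^H,\eta^H,\boldsymbol y^H,u^H)$. *)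

From HB Require Import structures.
From mathcomp Require Import all_boot all_order all_algebra.
From mathcomp Require Import reals.
Unset Strict Implicit. Unset Printing Implicit Defensive.
Import Order.TTheory GRing.Theory Num.Theory.
Local Open Scope ring_scope.

(* Scenario tree with all root-to-leaf paths of exactly T nodes.            *)
(* dep n = depth of n (root has depth 0); the period of n is t_n = dep n+1. *)
Record stree (T : nat) := STree {
  node : finType;
  root : node;
  par : node -> node;
  dep : node -> nat;
  par_root : par root = root;
  dep_root : dep root = 0%N;
  dep_par : forall n, n != root -> dep n = (dep (par n)).+1;
  dep_lt : forall n, (dep n < T)%N;
  has_child : forall n, ((dep n).+1 < T)%N -> exists m, m != root /\ par m = n
}.

Arguments node {T} _.
Arguments root {T} _.
Arguments par {T} _ _.
Arguments dep {T} _ _.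
Set Implicit Arguments.

Section Model.
Variables (T : nat) (S : stree T).
Local Notation V := (node S).

Definition tn (n : V) : nat := (dep S n).+1.
(* m is in P(n), the root-to-n path (inclusive) *)
Definition anc (n m : V) : bool :=
  (dep S m <= dep S n)%N && (iter (dep S n - dep S m) (par S) n == m).
Definition child (n m : V) : bool := (m != root S) && (par S m == n).
Definition is_leaf (n : V) : bool := tn n == T.
End Model.

(* max / min of F over the (nonempty) finite set P; 0 if P is empty *)
Definition maxf (R : realDomainType) (I : finType) (P : pred I) (F : I -> R) : R :=
  let s := [seq F i | i <- enum P] in foldr Num.max (head 0 s) s.
Definition minf (R : realDomainType) (I : finType) (P : pred I) (F : I -> R) : R :=
  let s := [seq F i | i <- enum P] in foldr Num.min (head 0 s) s.

(* Problem data of the multistage model. Periods are indexed 1..T. *)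
Record msdata (R : realType) (T M N : nat) := MSData {
  tree : stree T;
  fc : nat -> 'I_M -> R;
  cc : nat -> 'I_M -> 'I_N -> R;
  hc : nat -> 'I_M -> R;
  prob : node tree -> R;
  dem : node tree -> 'I_N -> R;
  lam : nat -> R;
  alp : nat -> R
}.
Arguments tree {R T M N} _.
Arguments fc {R T M N} _ _ _.
Arguments cc {R T M N} _ _ _ _.
Arguments hc {R T M N} _ _ _.
Arguments prob {R T M N} _ _.
Arguments dem {R T M N} _ _ _.
Arguments lam {R T M N} _ _.
Arguments alp {R T M N} _ _.

Definition ms_wf (R : realType) (T M N : nat) (D : msdata R T M N) : Prop :=
  let S := tree D in
  (forall t i, (1 <= t <= T)%N -> 0 <= fc D t i) /\
  (forall t i j, (1 <= t <= T)%N -> 0 <= cc D t i j) /\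
  (forall t i, (1 <= t <= T)%N -> 0 < hc D t i) /\
  (forall n, 0 < prob D n) /\
  (forall t, (1 <= t <= T)%N -> \sum_(n : node S | tn n == t) prob D n = 1) /\
  (forall n, ~~ is_leaf n -> \sum_(m : node S | child n m) prob D m = prob D n) /\
  (forall n j, 0 <= dem D n j) /\
  (forall t, (2 <= t <= T)%N -> 0 <= lam D t <= 1) /\
  (forall t, (2 <= t <= T)%N -> 0 < alp D t < 1).

(* A solution (x, eta, y, u) of the multistage model; eta at leaves and u at
   the root are not variables of the model (they have zero objective weight
   and appear in no constraint). *)
Record msol (R : realType) (V : finType) (M N : nat) := MSol {
  sx : V -> 'I_M -> R;
  seta : V -> R;
  sy : V -> 'I_M -> 'I_N -> R;
  su : V -> R
}.
Arguments sx {R V M N} _ _ _.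
Arguments seta {R V M N} _ _.
Arguments sy {R V M N} _ _ _ _.
Arguments su {R V M N} _ _.

Section Multistage.
Variables (R : realType) (T M N : nat) (D : msdata R T M N).
Local Notation S := (tree D).
Local Notation V := (node S).
Local Notation sol := (msol R V M N).

Definition cumX (x : V -> 'I_M -> R) (n : V) (i : 'I_M) : R :=
  \sum_(m : V | anc n m) x m i.
Definition Bop (t : nat) (yn : 'I_M -> 'I_N -> R) (i : 'I_M) : R :=
  (hc D t i)^-1 * \sum_j yn i j.
Definition Aop (yn : 'I_M -> 'I_N -> R) (j : 'I_N) : R := \sum_i yn i j.
Definition fdot (t : nat) (X : 'I_M -> R) : R := \sum_i fc D t i * X i.
Definition cdot (t : nat) (yn : 'I_M -> 'I_N -> R) : R :=
  \sum_i \sum_j cc D t i j * yn i j.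

Definition ftil (n : V) (i : 'I_M) : R :=
  if n == root S then fc D (tn n) i else (1 - lam D (tn n)) * fc D (tn n) i.
Definition ctil (n : V) (i : 'I_M) (j : 'I_N) : R :=
  if n == root S then cc D (tn n) i j else (1 - lam D (tn n)) * cc D (tn n) i j.
Definition ltil (n : V) : R := if is_leaf n then 0 else lam D (tn n).+1.
Definition atil (n : V) : R :=
  if n == root S then 0 else lam D (tn n) / (1 - alp D (tn n)).

Definition zMS (s : sol) : R :=
  \sum_(n : V) prob D n *
    ( \sum_i ftil n i * cumX (sx s) n i
    + \sum_i \sum_j ctil n i j * sy s n i j
    + ltil n * seta s n + atil n * su s n).

Definition feas_rel (s : sol) : Prop :=
  (forall n i, 0 <= sx s n i) /\
  (forall n i j, 0 <= sy s n i j) /\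
  (forall n, n != root S -> 0 <= su s n) /\
  (forall n j, Aop (sy s n) j = dem D n j) /\
  (forall n i, Bop (tn n) (sy s n) i <= cumX (sx s) n i) /\
  (forall n, n != root S ->
     fdot (tn n) (cumX (sx s) n) + cdot (tn n) (sy s n) <= su s n + seta s (par S n)).

Definition x_integral (s : sol) : Prop := forall n i, sx s n i \is a Num.int.

Definition feas_int (s : sol) : Prop := feas_rel s /\ x_integral s.

Definition opt_MS (s : sol) : Prop :=
  feas_int s /\ forall s', feas_int s' -> zMS s <= zMS s'.
Definition opt_LP (s : sol) : Prop :=
  feas_rel s /\ forall s', feas_rel s' -> zMS s <= zMS s'.

Definition ceilB (yk : V -> 'I_M -> 'I_N -> R) (m : V) (i : 'I_M) : R :=
  (Num.ceil (Bop (tn m) (yk m) i))%:~R.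
Definition capX (yk : V -> 'I_M -> 'I_N -> R) (n : V) (i : 'I_M) : R :=
  maxf (anc n) (fun m => ceilB yk m i).
Definition xnew (yk : V -> 'I_M -> 'I_N -> R) (n : V) (i : 'I_M) : R :=
  if n == root S then ceilB yk n i else capX yk n i - capX yk (par S n) i.
Definition etanew (x1 : V -> 'I_M -> R) (yk : V -> 'I_M -> 'I_N -> R)
    (uk : V -> R) (n : V) : R :=
  maxf (child n)
    (fun m => fdot (tn m) (cumX x1 m) + cdot (tn m) (yk m) - uk m).

Definition node_feas (n : V) (X : 'I_M -> R) (e : R)
    (yn : 'I_M -> 'I_N -> R) (un : R) : Prop :=
  (forall i j, 0 <= yn i j) /\
  (forall i, Bop (tn n) yn i <= X i) /\
  (forall j, Aop yn j = dem D n j) /\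
  (n != root S -> 0 <= un /\ fdot (tn n) X - e <= un - cdot (tn n) yn).
Definition node_obj (n : V) (yn : 'I_M -> 'I_N -> R) (un : R) : R :=
  \sum_i \sum_j ctil n i j * yn i j + atil n * un.
Definition node_opt (n : V) (X : 'I_M -> R) (e : R)
    (yn : 'I_M -> 'I_N -> R) (un : R) : Prop :=
  node_feas n X e yn un /\
  forall yn' un', node_feas n X e yn' un' -> node_obj n yn un <= node_obj n yn' un'.

Definition alg_step (s s' : sol) : Prop :=
  (forall n i, sx s' n i = xnew (sy s) n i) /\
  (forall n, ~~ is_leaf n -> seta s' n = etanew (sx s') (sy s) (su s) n) /\
  (forall n, node_opt n (cumX (sx s') n) (seta s' (par S n)) (sy s' n) (su s' n)).

Definition it_dist (s s' : sol) : R :=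
  Num.max
    (Num.max (maxf predT (fun p : V * 'I_M => `|sx s p.1 p.2 - sx s' p.1 p.2|))
             (maxf predT (fun p : V * 'I_M * 'I_N =>
                            `|sy s p.1.1 p.1.2 p.2 - sy s' p.1.1 p.1.2 p.2|)))
    (Num.max (maxf (fun n : V => ~~ is_leaf n) (fun n => `|seta s n - seta s' n|))
             (maxf (fun n : V => n != root S) (fun n => `|su s n - su s' n|))).

(* sH is a possible output of Algorithm 1 with tolerance eps
   (for some choice of the optimal solutions of the LPs solved). *)
Definition alg1_output (eps : R) (sH : sol) : Prop :=
  exists s0 : sol, opt_LP s0 /\
   ((x_integral s0 /\ sH = s0) \/
    (~ x_integral s0 /\
     exists (its : nat -> sol) (K : nat),
       its 0%N = s0 /\
       (forall k, (k < K)%N -> alg_step (its k) (its k.+1)) /\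
       (0 < K)%N /\
       it_dist (its K) (its K.-1) < eps /\
       (forall k, (0 < k < K)%N -> eps <= it_dist (its k) (its k.-1)) /\
       sH = its K)).

Definition h_max : R := maxf predT (hc D 1).
Definition f_max (t : nat) : R := maxf predT (fc D t).
Definition f_min (t : nat) : R := minf predT (fc D t).
Definition c_min (t : nat) : R := minf predT (fun p : 'I_M * 'I_N => cc D t p.1 p.2).
Definition M_min : R := (Num.ceil ((\sum_j dem D (root S) j) / h_max))%:~R.
Definition dem_min (t : nat) : R :=
  minf (fun n : V => tn n == t) (fun n => \sum_j dem D n j).
Definition bound_den : R :=
  M_min * (\sum_(1 <= t < T.+1) f_min t)
  + \sum_(1 <= t < T.+1) c_min t * dem_min t.

End Multistage.

Arguments zMS {R T M N} D s.
Arguments opt_MS {R T M N} D s.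
Arguments opt_LP {R T M N} D s.
Arguments feas_rel {R T M N} D s.
Arguments feas_int {R T M N} D s.
Arguments alg1_output {R T M N} D eps sH.

(* Lower bound: the CVaR constraints make z^MS dominate the expected node cost
   f.X_n + c.y_n, and at every node the cumulative capacity X_n is an integer vector
   whose total is at least the root demand divided by h_max, while the demand there is
   at least the minimum of its period; summing over periods gives the denominator.
   Upper bound: the first rounding step of Algorithm 1 raises every cumulative capacity
   by less than one unit and keeps the previous y, u feasible for the node subproblems,
   so it raises z^MS by at most sum_n p_n sum_i f_(t_n,i) <= M sum_t f_(t,max) (the
   eta's absorb the same increase through their CVaR constraints); later steps keep
   the capacities integral and never increase z^MS. As the LP optimum is below z^*,
   z^H <= z^* + M sum_t f_(t,max), and dividing by z^* >= denominator gives the ratio. *)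

From Pilot Require Import Defs.
From HB Require Import structures.
From mathcomp Require Import all_boot all_order all_algebra.
From mathcomp Require Import reals.
From mathcomp Require Import ring lra.
Import Order.TTheory GRing.Theory Num.Theory.
Local Open Scope ring_scope.
Set Implicit Arguments. Unset Strict Implicit. Unset Printing Implicit Defensive.

Arguments dep_par {T s n} _.
Arguments has_child {T s n} _.
Arguments dep_lt {T s} n.
Arguments dep_root {T s}.

Section Tree.
Variables (T : nat) (S : stree T).
Local Notation V := (node S).
Local Notation rt := (Defs.root S).

Lemma dep0_root (n : V) : dep S n = 0%N -> n = rt.
Proof.
move=> h; apply/eqP; apply: contraT => hn.
by rewrite (dep_par hn) in h.
Qed.

Lemma stree_ind (P : V -> Prop) :
  P rt -> (forall n, n != rt -> P (par S n) -> P n) -> forall n, P n.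
Proof.
move=> Prt Ppar n; move hd: (dep S n) => d.
elim: d n hd => [|d IH] n hd; first by rewrite (dep0_root hd).
have hn : n != rt by apply/eqP => e; rewrite e dep_root in hd.
by apply: (Ppar _ hn); apply: IH; move: hd; rewrite (dep_par hn) => -[].
Qed.

Lemma anc_refl (n : V) : anc n n.
Proof. by rewrite /anc leqnn subnn /=. Qed.

Lemma anc_trans (a b c : V) : anc a b -> anc b c -> anc a c.
Proof.
rewrite /anc => /andP[hab /eqP eab] /andP[hbc /eqP ebc].
rewrite (leq_trans hbc hab) /=.
have -> : (dep S a - dep S c = (dep S b - dep S c) + (dep S a - dep S b))%N.
  by rewrite addnC addnBA // subnK.
by rewrite iterD eab ebc.
Qed.

Lemma anc_par (n m : V) :
  n != rt -> anc n m = (m == n) || anc (par S n) m.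
Proof.
move=> hn; rewrite /anc.
case: (eqVneq m n) => [->|hmn] /=; first by rewrite leqnn subnn eqxx.
rewrite (dep_par hn) leq_eqVlt ltnS.
case: (eqVneq (dep S m) (dep S (par S n)).+1) => [e|ne] /=.
  by rewrite e subnn /= eq_sym (negbTE hmn) leqNgt ltnSn.
case: leqP => hle //=.
by rewrite subSn // iterSr.
Qed.

Lemma anc_root (n : V) : anc n rt.
Proof.
elim/stree_ind: n => [|n hn IH]; first exact: anc_refl.
by rewrite anc_par // IH orbT.
Qed.

Lemma anc_root_eq (m : V) : anc rt m = (m == rt).
Proof.
rewrite /anc dep_root leqn0.
case: (eqVneq m rt) => [->|hm]; first by rewrite dep_root.
by rewrite (dep_par hm).
Qed.

Lemma tn_leT (n : V) : (tn n <= T)%N.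
Proof. exact: dep_lt. Qed.

Lemma tn_root : tn rt = 1%N.
Proof. by rewrite /tn dep_root. Qed.

Lemma T_gt0 : (0 < T)%N.
Proof. by rewrite -(tn_root) tn_leT. Qed.

Lemma child_tn (n m : V) : child n m -> tn m = (tn n).+1.
Proof. by case/andP => hm /eqP <-; rewrite /tn (dep_par hm). Qed.

Lemma child_par (m : V) : m != rt -> child (par S m) m.
Proof. by move=> hm; rewrite /child hm eqxx. Qed.

Lemma par_nonleaf (m : V) : m != rt -> ~~ is_leaf (par S m).
Proof.
move=> hm; rewrite /is_leaf; have := dep_lt m; rewrite (dep_par hm) /tn => h.
by rewrite neq_ltn h.
Qed.

Lemma nonleaf_tn (n : V) : ~~ is_leaf n -> ((tn n).+1 <= T)%N.
Proof. by rewrite /is_leaf => h; rewrite ltn_neqAle h tn_leT. Qed.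

Lemma nonleaf_child (n : V) : ~~ is_leaf n -> exists m, child n m.
Proof.
move/nonleaf_tn => /has_child[m [hm e]].
by exists m; rewrite /child hm e eqxx.
Qed.

End Tree.

Section MaxMin.
Variable R : realDomainType.

Lemma foldr_max_ge (a : R) s x : x \in a :: s -> x <= foldr Num.max a s.
Proof.
elim: s => [|y s IH] /=; first by rewrite inE => /eqP ->.
rewrite !inE le_max => /or3P[/eqP hx|/eqP->|hx]; rewrite ?lexx ?orbT //.
  by rewrite IH ?hx ?mem_head ?orbT.
by rewrite IH ?orbT // inE hx orbT.
Qed.

Lemma foldr_min_le (a : R) s x : x \in a :: s -> foldr Num.min a s <= x.
Proof.
elim: s => [|y s IH] /=; first by rewrite inE => /eqP ->.
rewrite !inE ge_min => /or3P[/eqP hx|/eqP->|hx]; rewrite ?lexx ?orbT //.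
  by rewrite IH ?hx ?mem_head ?orbT.
by rewrite IH ?orbT // inE hx orbT.
Qed.

Lemma foldr_sel_mem (op : R -> R -> R) (a : R) s :
  (forall x y, op x y \in [:: x; y]) -> foldr op a s \in a :: s.
Proof.
move=> hop; elim: s => [|y s IH] /=; first exact: mem_head.
have := hop y (foldr op a s); rewrite !inE => /orP[]/eqP->; first by rewrite eqxx orbT.
by move: IH; rewrite inE => /orP[->|->]; rewrite ?orbT.
Qed.

Lemma foldr_head_mem (op : R -> R -> R) (s : seq R) :
  (forall x y, op x y \in [:: x; y]) -> s != [::] -> foldr op (head 0 s) s \in s.
Proof.
move=> hop; case: s => [//|a s] _ /=.
have := hop a (foldr op a s); rewrite inE => /orP[/eqP->|]; first exact: mem_head.
by rewrite inE => /eqP->; apply: foldr_sel_mem.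
Qed.

Variables (I : finType) (P : pred I) (F : I -> R).

Lemma maxf_ge i : P i -> F i <= maxf P F.
Proof.
move=> hi; rewrite /maxf.
have : F i \in [seq F i | i <- enum P] by apply: map_f; rewrite mem_enum.
case: [seq F i | i <- enum P] => [//|y s] hin.
by apply: (@foldr_max_ge y (y :: s)); rewrite inE hin orbT.
Qed.

Lemma minf_le i : P i -> minf P F <= F i.
Proof.
move=> hi; rewrite /minf.
have : F i \in [seq F i | i <- enum P] by apply: map_f; rewrite mem_enum.
case: [seq F i | i <- enum P] => [//|y s] hin.
by apply: (@foldr_min_le y (y :: s)); rewrite inE hin orbT.
Qed.

Lemma foldr_map_mem (op : R -> R -> R) i0 :
  (forall x y, op x y \in [:: x; y]) -> P i0 ->
  let s := [seq F i | i <- enum P] in exists2 i, P i & foldr op (head 0 s) s = F i.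
Proof.
move=> hop hi0 s; have /mapP[i] : foldr op (head 0 s) s \in s.
  have hF : F i0 \in s by apply: map_f; rewrite mem_enum.
  by apply: foldr_head_mem => //; apply/eqP => s0; rewrite s0 in hF.
by rewrite mem_enum => hi ->; exists i.
Qed.

Lemma maxf_mem i0 : P i0 -> exists2 i, P i & maxf P F = F i.
Proof. by apply: foldr_map_mem => x y; rewrite maxElt; case: ifP; rewrite !inE eqxx ?orbT. Qed.

Lemma minf_mem i0 : P i0 -> exists2 i, P i & minf P F = F i.
Proof. by apply: foldr_map_mem => x y; rewrite minElt; case: ifP; rewrite !inE eqxx ?orbT. Qed.

Lemma maxf_le b i0 : P i0 -> (forall i, P i -> F i <= b) -> maxf P F <= b.
Proof. by move=> h0 hb; have [i hi ->] := maxf_mem h0; apply: hb. Qed.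

Lemma minf_ge b i0 : P i0 -> (forall i, P i -> b <= F i) -> b <= minf P F.
Proof. by move=> h0 hb; have [i hi ->] := minf_mem h0; apply: hb. Qed.

End MaxMin.

Lemma weighted_sum_shift_le (R : realDomainType) (I : finType) (w X Y : I -> R) (d : R) :
  (forall i, 0 <= w i) -> (forall i, X i <= Y i + d) ->
  \sum_i w i * X i <= \sum_i w i * Y i + d * \sum_i w i.
Proof.
move=> hw hXY; rewrite mulr_sumr -big_split; apply: ler_sum => i _ /=.
by rewrite [d * _]mulrC -mulrDr ler_wpM2l.
Qed.

Lemma ler_ratio_add1 (R : realFieldType) (a b c d : R) :
  0 < d -> d <= b -> 0 <= c -> a <= b + c -> a / b <= 1 + c / d.
Proof.
move=> hd hdb hc hab; have hb : 0 < b := lt_le_trans hd hdb.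
rewrite ler_pdivrMr // mulrDl mul1r; apply: le_trans hab _.
by rewrite lerD2l mulrAC ler_pdivlMr // ler_wpM2l.
Qed.

Section Model.
Variables (R : realType) (T M N : nat) (D : msdata R T M N).
Hypothesis hwf : ms_wf D.
Local Notation S := (tree D).
Local Notation V := (node S).
Local Notation rt := (Defs.root S).
Local Notation sol := (msol R V M N).
Local Notation p := (prob D).
Local Notation fsum t := (\sum_i fc D t i).
Local Notation Bop := (@Defs.Bop R T M N D).
Local Notation Aop := (@Defs.Aop R M N).
Local Notation fdot := (@Defs.fdot R T M N D).
Local Notation cdot := (@Defs.cdot R T M N D).
Local Notation cumX := (@Defs.cumX R T M N D).
Local Notation capX := (@Defs.capX R T M N D).

Lemma f_ge0 t i : (1 <= t <= T)%N -> 0 <= fc D t i.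
Proof. by case: hwf => h _; apply: h. Qed.
Lemma c_ge0 t i j : (1 <= t <= T)%N -> 0 <= cc D t i j.
Proof. by case: hwf => _ [h _]; apply: h. Qed.
Lemma h_gt0 t i : (1 <= t <= T)%N -> 0 < hc D t i.
Proof. by case: hwf => _ [_ [h _]]; apply: h. Qed.
Lemma p_gt0 n : 0 < p n.
Proof. by case: hwf => _ [_ [_ [h _]]]; apply: h. Qed.
Lemma p_sum_period t : (1 <= t <= T)%N -> \sum_(n : V | tn n == t) p n = 1.
Proof. by case: hwf => _ [_ [_ [_ [h _]]]]; apply: h. Qed.
Lemma p_sum_child n : ~~ is_leaf n -> \sum_(m : V | child n m) p m = p n.
Proof. by case: hwf => _ [_ [_ [_ [_ [h _]]]]]; apply: h. Qed.
Lemma lam_range t : (2 <= t <= T)%N -> 0 <= lam D t <= 1.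
Proof. by case: hwf => _ [_ [_ [_ [_ [_ [_ [h _]]]]]]]; apply: h. Qed.
Lemma alp_range t : (2 <= t <= T)%N -> 0 < alp D t < 1.
Proof. by case: hwf => _ [_ [_ [_ [_ [_ [_ [_ h]]]]]]]; apply: h. Qed.

Lemma tn_range (n : V) : (1 <= tn n <= T)%N.
Proof. exact: tn_leT. Qed.

Lemma tn_range_nonroot (n : V) : n != rt -> (2 <= tn n <= T)%N.
Proof. by move=> hn; rewrite tn_leT andbT /tn (dep_par hn). Qed.

Lemma sum_nonroot_by_parent (G : V -> R) :
  \sum_(m | m != rt) G m = \sum_(n | ~~ is_leaf n) \sum_(m | child n m) G m.
Proof.
rewrite (partition_big (par S) (fun n => ~~ is_leaf n)); last exact: par_nonleaf.
by apply: eq_bigr => n _; apply: eq_bigl => m.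
Qed.

Lemma sum_period (G : nat -> R) :
  \sum_n p n * G (tn n) = \sum_(1 <= t < T.+1) G t.
Proof.
rewrite (partition_big (fun n : V => Ordinal (dep_lt n)) predT) //=.
rewrite big_add1 /= big_mkord; apply: eq_bigr => j _.
rewrite -[G j.+1]mul1r -(@p_sum_period j.+1); last by rewrite /= ltn_ord.
rewrite mulr_suml; apply: eq_big => [n|n /eqP hn]; last by rewrite /tn -hn.
by rewrite /tn eqSS -(inj_eq val_inj).
Qed.

Lemma sum_ltil (Z : V -> R) :
  \sum_n p n * (ltil n * Z n)
  = \sum_(n | ~~ is_leaf n) \sum_(m | child n m) p m * lam D (tn m) * Z n.
Proof.
rewrite (bigID (fun n : V => is_leaf n)) /= big1 ?add0r; last first.
  by move=> n hn; rewrite /ltil hn mul0r mulr0.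
apply: eq_bigr => n hn; rewrite /ltil (negbTE hn) -(p_sum_child hn) !mulr_suml.
by apply: eq_bigr => m hm; rewrite (child_tn hm); ring.
Qed.

Lemma ltil_ge0 (n : V) : 0 <= ltil n.
Proof.
rewrite /ltil; case: ifP => // /negbT /nonleaf_tn h.
have /andP[] // : 0 <= lam D (tn n).+1 <= 1 by apply: lam_range; rewrite h.
Qed.

Lemma cumX_par (x : V -> 'I_M -> R) n i : n != rt ->
  cumX x n i = x n i + cumX x (par S n) i.
Proof.
move=> hn; rewrite /Defs.cumX (bigD1 n) ?anc_refl //=; congr (_ + _).
apply: eq_bigl => m; rewrite (anc_par _ hn).
case: (eqVneq m n) => [->|_] /=; last by rewrite andbT.
by rewrite /anc (dep_par hn) ltn_geF.
Qed.

Lemma cumX_root (x : V -> 'I_M -> R) i : cumX x rt i = x rt i.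
Proof. by rewrite /Defs.cumX (eq_bigl _ _ (@anc_root_eq _ S)) big_pred1_eq. Qed.

Lemma cumX_anc_le (x : V -> 'I_M -> R) l m i :
  (forall n i, 0 <= x n i) -> anc m l -> cumX x l i <= cumX x m i.
Proof.
move=> hx hml; rewrite /Defs.cumX [X in _ <= X](bigID (anc l)) /=.
rewrite [X in _ <= X + _](eq_bigl (anc l)) ?lerDl ?sumr_ge0 // => j.
by case: (boolP (anc l j)) => h; rewrite ?andbT ?andbF //; apply: anc_trans h.
Qed.

Lemma capX_root (y : V -> 'I_M -> 'I_N -> R) i : capX y rt i = ceilB y rt i.
Proof.
apply/le_anti/andP; split; last exact: (maxf_ge (fun m => ceilB _ m i) (anc_refl rt)).
by apply: (maxf_le (anc_refl rt)) => m; rewrite anc_root_eq => /eqP ->.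
Qed.

Lemma capX_anc_le (y : V -> 'I_M -> 'I_N -> R) l m i :
  anc m l -> capX y l i <= capX y m i.
Proof.
move=> hml; apply: (maxf_le (anc_refl l)) => j hj.
exact: (maxf_ge (fun m => ceilB _ m i) (anc_trans hml hj)).
Qed.

Lemma capX_int (y : V -> 'I_M -> 'I_N -> R) n i : capX y n i \is a Num.int.
Proof.
rewrite /Defs.capX.
by have [l _ ->] := maxf_mem (fun m => ceilB y m i) (anc_refl n); apply: intr_int.
Qed.

Lemma Bop_le_capX (y : V -> 'I_M -> 'I_N -> R) n i : Bop (tn n) (y n) i <= capX y n i.
Proof. exact: le_trans (ceil_ge _) (maxf_ge (fun m => ceilB y m i) (anc_refl n)). Qed.

(* The increments of step (a) telescope. *)
Lemma cumX_xnew (y : V -> 'I_M -> 'I_N -> R) n i : cumX (xnew y) n i = capX y n i.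
Proof.
elim/stree_ind: n => [|n hn IH]; first by rewrite cumX_root capX_root /xnew eqxx.
by rewrite cumX_par // IH /xnew (negbTE hn) subrK.
Qed.

Definition risk_wt (n : V) : R := if n == rt then 1 else 1 - lam D (tn n).

Lemma risk_wt_ge0 (n : V) : 0 <= risk_wt n.
Proof.
rewrite /risk_wt; case: eqP => [_|/eqP hn]; first exact: ler01.
by have /andP[_ h1] := lam_range (tn_range_nonroot hn); rewrite subr_ge0.
Qed.

Lemma ftil_risk_wt (n : V) i : ftil n i = risk_wt n * fc D (tn n) i.
Proof. by rewrite /ftil /risk_wt; case: ifP; rewrite ?mul1r. Qed.

Lemma ctil_risk_wt (n : V) i j : ctil n i j = risk_wt n * cc D (tn n) i j.
Proof. by rewrite /ctil /risk_wt; case: ifP; rewrite ?mul1r. Qed.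

Lemma ftil_ge0 (n : V) i : 0 <= ftil n i.
Proof. by rewrite ftil_risk_wt mulr_ge0 ?risk_wt_ge0 ?f_ge0 ?tn_range. Qed.

Lemma sum_ftil (n : V) (X : 'I_M -> R) :
  \sum_i ftil n i * X i = risk_wt n * fdot (tn n) X.
Proof.
rewrite /Defs.fdot mulr_sumr.
by apply: eq_bigr => i _; rewrite ftil_risk_wt mulrA.
Qed.

Lemma sum_ctil (n : V) (y : 'I_M -> 'I_N -> R) :
  \sum_i \sum_j ctil n i j * y i j = risk_wt n * cdot (tn n) y.
Proof.
rewrite /Defs.cdot mulr_sumr; apply: eq_bigr => i _; rewrite mulr_sumr.
by apply: eq_bigr => j _; rewrite ctil_risk_wt mulrA.
Qed.

Lemma sum_risk_wt (Y : V -> R) :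
  \sum_n p n * (risk_wt n * Y n) + \sum_(m | m != rt) p m * lam D (tn m) * Y m
  = \sum_n p n * Y n.
Proof.
rewrite (bigD1 rt) //= [RHS](bigD1 rt) //= /risk_wt eqxx mul1r -addrA.
by congr (_ + _); rewrite -big_split; apply: eq_bigr => n hn /=; rewrite (negbTE hn); ring.
Qed.

Definition exp_fcost : R := \sum_n p n * fsum (tn n).

Lemma exp_fcost_risk :
  \sum_n p n * (\sum_i ftil n i + ltil n * fsum (tn n).+1) = exp_fcost.
Proof.
have ftil_sum n : \sum_i ftil n i = risk_wt n * fsum (tn n).
  by rewrite mulr_sumr; apply: eq_bigr => i _; rewrite ftil_risk_wt.
under eq_bigr do rewrite ftil_sum mulrDr.
rewrite big_split /= sum_ltil /exp_fcost -(sum_risk_wt (fun n => fsum (tn n))).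
rewrite sum_nonroot_by_parent; congr (_ + _).
by apply: eq_bigr => n _; apply: eq_bigr => m hm; rewrite (child_tn hm).
Qed.

Lemma exp_fcost_ge0 : 0 <= exp_fcost.
Proof.
apply: sumr_ge0 => n _; rewrite mulr_ge0 ?(ltW (p_gt0 n)) //.
by apply: sumr_ge0 => i _; rewrite f_ge0 ?tn_range.
Qed.

Lemma exp_fcost_le : exp_fcost <= M%:R * \sum_(1 <= t < T.+1) f_max D t.
Proof.
rewrite /exp_fcost (sum_period (fun t => fsum t)) mulr_sumr; apply: ler_sum => t _.
apply: le_trans (_ : _ <= \sum_(i < M) f_max D t) _.
  by apply: ler_sum => i _; exact: (maxf_ge (fc D t) (isT : predT i)).
by rewrite sumr_const card_ord mulr_natl.
Qed.

Definition node_cost (s : sol) (n : V) : R :=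
  fdot (tn n) (cumX (sx s) n) + cdot (tn n) (sy s n).

Lemma zMS_split (s : sol) :
  zMS D s = \sum_n p n * (risk_wt n * node_cost s n)
            + \sum_n p n * (ltil n * seta s n) + \sum_n p n * (atil n * su s n).
Proof.
rewrite /zMS -!big_split; apply: eq_bigr => n _ /=.
by rewrite sum_ftil sum_ctil /node_cost; ring.
Qed.

Lemma lam_le_atil (n : V) : n != rt -> lam D (tn n) <= atil n.
Proof.
move=> hn; have /andP[hl0 _] := lam_range (tn_range_nonroot hn).
have /andP[ha0 ha1] := alp_range (tn_range_nonroot hn).
rewrite /atil (negbTE hn) ler_peMr // invr_ge1 ?unitfE ?subr_eq0 ?gt_eqF //.
  by rewrite lerBlDr lerDl ltW.
by rewrite subr_gt0.
Qed.

(* Here the CVaR constraint [u_m + eta_(a m) >= cost_m] and [lam_m <= atil_m] enter. *)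
Lemma lam_cost_le (s : sol) (m : V) : feas_rel D s -> m != rt ->
  lam D (tn m) * node_cost s m <= lam D (tn m) * seta s (par S m) + atil m * su s m.
Proof.
move=> [_ [_ [hu [_ [_ hE]]]]] hm.
have /andP[hl0 _] := lam_range (tn_range_nonroot hm).
have hlu : lam D (tn m) * su s m <= atil m * su s m.
  by apply: ler_wpM2r; [exact: hu | exact: lam_le_atil].
have hlc : lam D (tn m) * node_cost s m <= lam D (tn m) * (su s m + seta s (par S m)).
  exact: ler_wpM2l (hE m hm).
lra.
Qed.

Lemma exp_node_cost_le_zMS (s : sol) : feas_rel D s ->
  \sum_n p n * node_cost s n <= zMS D s.
Proof.
move=> hs; rewrite zMS_split -addrA -(sum_risk_wt (node_cost s)) lerD2l.
rewrite sum_ltil [\sum_n p n * (atil n * su s n)](bigD1 rt) //=.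
rewrite {1}/atil eqxx mul0r mulr0 add0r !sum_nonroot_by_parent -big_split /=.
apply: ler_sum => n _; rewrite -big_split; apply: ler_sum => m /andP[hm /eqP hpm] /=.
rewrite -!mulrA -mulrDr ler_wpM2l ?(ltW (p_gt0 m)) // -hpm.
exact: lam_cost_le.
Qed.

Hypotheses (hM : (0 < M)%N) (hN : (0 < N)%N).

Lemma h_max_gt0 : 0 < h_max D.
Proof.
have h1 : (1 <= 1 <= T)%N by rewrite leqnn (T_gt0 S).
exact: lt_le_trans (h_gt0 (Ordinal hM) h1) (maxf_ge _ (isT : predT (Ordinal hM))).
Qed.

Lemma f_min_ge0 (n : V) : 0 <= f_min D (tn n).
Proof. by apply: (minf_ge (isT : predT (Ordinal hM))) => i _; rewrite f_ge0 ?tn_range. Qed.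

Lemma c_min_ge0 (n : V) : 0 <= c_min D (tn n).
Proof.
apply: (minf_ge (isT : predT (Ordinal hM, Ordinal hN))) => q _.
by rewrite c_ge0 ?tn_range.
Qed.

Lemma sum_dem (s : sol) (n : V) : feas_rel D s ->
  \sum_j dem D n j = \sum_i \sum_j sy s n i j.
Proof.
move=> [_ [_ [_ [hA _]]]].
by rewrite exchange_big; apply: eq_bigr => j _; rewrite -hA.
Qed.

(* Every cumulative capacity dominates the root's, which must cover the root demand. *)
Lemma root_dem_le_capacity (s : sol) (n : V) : feas_rel D s ->
  (\sum_j dem D rt j) / h_max D <= \sum_i cumX (sx s) n i.
Proof.
move=> hs; have [hx [hy [_ [_ [hB _]]]]] := hs.
apply: le_trans (_ : _ <= \sum_i cumX (sx s) rt i) _; last first.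
  by apply: ler_sum => i _; apply: cumX_anc_le => //; exact: anc_root.
apply: le_trans (_ : _ <= \sum_i Bop 1 (sy s rt) i) _; last first.
  by apply: ler_sum => i _; have := hB rt i; rewrite tn_root.
have h1 : (1 <= 1 <= T)%N by rewrite leqnn (T_gt0 S).
rewrite (sum_dem _ hs) mulrC mulr_sumr; apply: ler_sum => i _; rewrite /Defs.Bop.
apply: ler_wpM2r; first by apply: sumr_ge0 => j _; exact: hy.
rewrite lef_pV2 ?posrE ?h_gt0 ?h_max_gt0 //.
exact: (maxf_ge (hc D 1) (isT : predT i)).
Qed.

Lemma M_min_le_capacity (s : sol) (n : V) : feas_int D s ->
  M_min D <= \sum_i cumX (sx s) n i.
Proof.
move=> [hs hint].
have hZ : \sum_i cumX (sx s) n i \is a Num.int.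
  by apply: rpred_sum => i _; apply: rpred_sum => m _; exact: hint.
by rewrite /M_min -(ceilK hZ) ler_int le_ceil // root_dem_le_capacity.
Qed.

Lemma node_cost_lb (s : sol) (n : V) : feas_int D s ->
  f_min D (tn n) * M_min D + c_min D (tn n) * dem_min D (tn n) <= node_cost s n.
Proof.
move=> hs; have [[hx [hy _]] _] := hs.
apply: lerD.
  apply: le_trans (ler_wpM2l (f_min_ge0 n) (M_min_le_capacity n hs)) _.
  rewrite /Defs.fdot mulr_sumr; apply: ler_sum => i _.
  by rewrite ler_wpM2r ?sumr_ge0 //; exact: (minf_le (fc D (tn n)) (isT : predT i)).
have hdm : dem_min D (tn n) <= \sum_j dem D n j.
  exact: (minf_le (fun m : V => \sum_j dem D m j) (eqxx (tn n))).
apply: le_trans (ler_wpM2l (c_min_ge0 n) hdm) _.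
rewrite (sum_dem _ hs.1) /Defs.cdot mulr_sumr; apply: ler_sum => i _.
rewrite mulr_sumr; apply: ler_sum => j _; rewrite ler_wpM2r //.
exact: (minf_le (fun q : 'I_M * 'I_N => cc D (tn n) q.1 q.2) (isT : predT (i, j))).
Qed.

Lemma bound_den_le_zMS (s : sol) : feas_int D s -> bound_den D <= zMS D s.
Proof.
move=> hs; apply: le_trans (exp_node_cost_le_zMS hs.1).
apply: le_trans (_ : \sum_n p n * (f_min D (tn n) * M_min D
                      + c_min D (tn n) * dem_min D (tn n)) <= _); last first.
  by apply: ler_sum => n _; rewrite ler_wpM2l ?(ltW (p_gt0 n)) ?node_cost_lb.
rewrite (sum_period (fun t => f_min D t * M_min D + c_min D t * dem_min D t)).
by rewrite big_split /= -mulr_suml mulrC.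
Qed.

(* [d] bounds the rounding gap of the cumulative capacities: 1 for the LP solution,
   0 for every later iterate. *)
Record iter_inv (s : sol) (d : R) : Prop := IterInv {
  inv_y_ge0 : forall n i j, 0 <= sy s n i j;
  inv_u_ge0 : forall n, n != rt -> 0 <= su s n;
  inv_dem : forall n j, Aop (sy s n) j = dem D n j;
  inv_cap : forall n i, Bop (tn n) (sy s n) i <= cumX (sx s) n i;
  inv_cvar : forall n, n != rt -> node_cost s n <= su s n + seta s (par S n);
  inv_mono : forall l m i, anc m l -> cumX (sx s) l i <= cumX (sx s) m i;
  inv_ceil : forall n i, (Num.ceil (cumX (sx s) n i))%:~R <= cumX (sx s) n i + d
}.

Lemma feas_rel_iter_inv (s : sol) : feas_rel D s -> iter_inv s 1.
Proof.
move=> [hx [hy [hu [hA [hB hE]]]]]; constructor => // [l m i|n i].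
  exact: cumX_anc_le.
by have := ceilB1_lt (cumX (sx s) n i); rewrite intrB ltrBlDr => /ltW.
Qed.

Definition zMS_term (s : sol) (n : V) : R :=
  \sum_i ftil n i * cumX (sx s) n i + \sum_i \sum_j ctil n i j * sy s n i j
  + ltil n * seta s n + atil n * su s n.

Section Step.
Variables (s s' : sol) (d : R).
Hypotheses (hs : iter_inv s d) (hstep : alg_step s s').

Lemma step_cumX n i : cumX (sx s') n i = capX (sy s) n i.
Proof.
have [hx _] := hstep.
by rewrite -cumX_xnew /Defs.cumX; apply: eq_bigr => m _; exact: hx.
Qed.

Lemma step_capX_le n i : capX (sy s) n i <= cumX (sx s) n i + d.
Proof.
apply: le_trans (inv_ceil hs n i); apply: (maxf_le (anc_refl n)) => l hl.
rewrite /ceilB ler_int le_ceil // (le_trans (inv_cap hs l i)) //.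
exact: inv_mono hs _ _ _ hl.
Qed.

Lemma step_eta_le n : ~~ is_leaf n -> seta s' n <= seta s n + d * fsum (tn n).+1.
Proof.
move=> hn; have [_ [heta _]] := hstep; rewrite heta //.
have [m0 hm0] := nonleaf_child hn.
apply: (maxf_le hm0) => m hm; have /andP[hm' /eqP hpm] := hm.
have hf : fdot (tn m) (cumX (sx s') m) <= fdot (tn m) (cumX (sx s) m) + d * fsum (tn m).
  apply: weighted_sum_shift_le => i; first by rewrite f_ge0 ?tn_range.
  by rewrite step_cumX step_capX_le.
have := inv_cvar hs hm'; rewrite hpm -(child_tn hm) /node_cost; lra.
Qed.

(* Step (b) cannot do worse than the previous [y, u], which remain feasible. *)
Lemma step_prev_feas n :
  node_feas n (cumX (sx s') n) (seta s' (par S n)) (sy s n) (su s n).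
Proof.
have [_ [heta _]] := hstep.
split; first exact: inv_y_ge0 hs n.
split; first by move=> i; rewrite step_cumX Bop_le_capX.
split; first exact: inv_dem hs n.
move=> hn; split; first exact: inv_u_ge0 hs n hn.
rewrite heta ?par_nonleaf // /etanew.
have := maxf_ge (fun m => fdot (tn m) (cumX (sx s') m) + cdot (tn m) (sy s m) - su s m)
          (child_par hn).
move=> /= h; lra.
Qed.

Lemma step_inv : iter_inv s' 0.
Proof.
have [_ [_ hopt]] := hstep; have feas' n := (hopt n).1.
constructor => [n i j|n hn|n j|n i|n hn|l m i hml|n i].
- by have [h _] := feas' n.
- by have [_ [_ [_ /(_ hn) []]]] := feas' n.
- by have [_ [_ [h _]]] := feas' n.
- by have [_ [h _]] := feas' n.
- by have [_ [_ [_ /(_ hn) [_ h]]]] := feas' n; rewrite /node_cost; lra.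
- by rewrite !step_cumX capX_anc_le.
- by rewrite step_cumX addr0 ceilK ?capX_int.
Qed.

Lemma step_term_le n :
  zMS_term s' n <= zMS_term s n + d * (\sum_i ftil n i + ltil n * fsum (tn n).+1).
Proof.
have [_ [_ hopt]] := hstep.
have hO := (hopt n).2 _ _ (step_prev_feas n).
have hF : \sum_i ftil n i * cumX (sx s') n i
          <= \sum_i ftil n i * cumX (sx s) n i + d * \sum_i ftil n i.
  apply: weighted_sum_shift_le => i; first exact: ftil_ge0.
  by rewrite step_cumX step_capX_le.
have hL : ltil n * seta s' n <= ltil n * seta s n + d * (ltil n * fsum (tn n).+1).
  case: (boolP (is_leaf n)) => hn; first by rewrite /ltil hn !mul0r mulr0 addr0.
  by rewrite mulrCA -mulrDr ler_wpM2l ?ltil_ge0 ?step_eta_le.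
move: hO; rewrite /Defs.node_obj /zMS_term; lra.
Qed.

Lemma step_zMS_le : zMS D s' <= zMS D s + d * exp_fcost.
Proof.
rewrite -exp_fcost_risk mulr_sumr /zMS -big_split; apply: ler_sum => n _ /=.
rewrite mulrCA -mulrDr; apply: ler_wpM2l; first exact: ltW (p_gt0 n).
exact: step_term_le.
Qed.

End Step.

Lemma iterates_inv_zMS_le (its : nat -> sol) K :
  feas_rel D (its 0%N) -> (forall k, (k < K)%N -> alg_step (its k) (its k.+1)) ->
  forall k, (0 < k <= K)%N ->
  iter_inv (its k) 0 /\ zMS D (its k) <= zMS D (its 0%N) + exp_fcost.
Proof.
move=> h0 hsteps; elim=> [//|[|k] IH] /andP[_ hk].
  have hinv := feas_rel_iter_inv h0; have hst := hsteps 0%N hk.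
  split; first exact: step_inv hst.
  by rewrite -[exp_fcost]mul1r; exact: step_zMS_le hinv hst.
have [hinv hz] := IH (ltnW hk); have hst := hsteps _ hk.
split; first exact: step_inv hst.
by apply: le_trans hz; have := step_zMS_le hinv hst; rewrite mul0r addr0.
Qed.

Lemma alg1_output_zMS_le eps (sH s : sol) : alg1_output D eps sH -> feas_int D s ->
  zMS D sH <= zMS D s + exp_fcost.
Proof.
move=> [s0 [[hs0 s0_opt] hcase]] hs.
apply: le_trans (_ : zMS D s0 + exp_fcost <= _); last by rewrite lerD2r s0_opt //; case: hs.
case: hcase => [[_ ->]|[_ [its [K [h0 [hsteps [hK [_ [_ ->]]]]]]]]].
  by rewrite lerDl exp_fcost_ge0.
rewrite -h0 in hs0 *.
have hKK : (0 < K <= K)%N by rewrite hK leqnn.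
by have [_] := iterates_inv_zMS_le hs0 hsteps hKK.
Qed.

End Model.

Unset Implicit Arguments.
Set Strict Implicit.

Theorem theorem4 (R : realType) (T M N : nat) (D : msdata R T M N)
  (hT : (2 <= T)%N) (hM : (0 < M)%N) (hN : (0 < N)%N) (hwf : ms_wf D)
  (eps : R) (heps : 0 < eps)
  (sH sopt : msol R (node (tree D)) M N)
  (hH : alg1_output D eps sH) (hopt : opt_MS D sopt)
  (hden : 0 < bound_den D) :
  zMS D sH / zMS D sopt
    <= 1 + (M%:R * \sum_(1 <= t < T.+1) f_max D t) / bound_den D.
Proof.
have hlow := bound_den_le_zMS hwf hM hN hopt.1.
have hfix := exp_fcost_le hwf.
apply: ler_ratio_add1 hden hlow (le_trans (exp_fcost_ge0 hwf) hfix) _.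
by apply: le_trans (alg1_output_zMS_le hwf hH hopt.1) _; rewrite lerD2l.
Qed.
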